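(* Let $(E,\rho)$ be a complete partial $v$-generalized metric space and let $S:E\to E$ satisfy $\rho(Su,Sw)\le\lambda\rho(u,w)$ for all $u,w\in E$, where $\lambda\in[0,1)$. Then $S$ has a unique fixed point $b\in E$, and $\rho(b,b)=0$.
   Context: Let $E$ be a nonempty set and $v\in\mathbb{N}$. $(E,\rho)$, with $\rho:E\times E\to[0,\infty)$, is a partial $v$-generalized metric space if for all $u,w,z_1,\dots,z_v\in E$: (1) $u=w$ iff $\rho(u,u)=\rho(u,w)=\rho(w,w)$; (2) $\rho(u,u)\le\rho(u,w)$; (3) $\rho(u,w)=\rho(w,u)$; (4) $\rho(u,w)\le\rho(u,z_1)+\rho(z_1,z_2)+\dots+\rho(z_{v-1},z_v)+\rho(z_v,w)-\sum_{i=1}^v\rho(z_i,z_i)$. A sequence $\{u_n\}$ in $E$ converges to $u\in E$ if $\lim_{n\to\infty}\rho(u_n,u)=\rho(u,u)$; it is Cauchy if $\lim_{n,m\to\infty}\rho(u_n,u_m)$ exists and is finite. $(E,\rho)$ is complete if for every Cauchy sequence $\{u_n\}$ there is $u\in E$ with $\lim_{n,m\to\infty}\rho(u_n,u_m)=\lim_{n\to\infty}\rho(u_n,u)=\rho(u,u)$. *)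

From Stdlib Require Import Reals.
Open Scope R_scope.

(* Chain sum for the v-generalized triangle inequality with points z 1, ..., z v:
   rho(u,z1) + rho(z1,z2) + ... + rho(z_{v-1},z_v) + rho(z_v,w) - sum_{i=1}^v rho(z_i,z_i). *)
Fixpoint inner_chain {E : Type} (rho : E -> E -> R) (z : nat -> E) (k : nat) : R :=
  match k with
  | O => 0
  | S k' => inner_chain rho z k' + rho (z k) (z (S k))
  end.
(* inner_chain rho z k = sum_{i=1}^{k} rho(z_i, z_{i+1})  (uses z 1 .. z (k+1)) *)

Fixpoint diag_sum {E : Type} (rho : E -> E -> R) (z : nat -> E) (k : nat) : R :=
  match k with
  | O => 0
  | S k' => diag_sum rho z k' + rho (z k) (z k)
  end.

Definition partial_v_gen_metric {E : Type} (v : nat) (rho : E -> E -> R) : Prop :=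
  (1 <= v)%nat /\
  (forall u w, 0 <= rho u w) /\
  (forall u w, u = w <-> (rho u u = rho u w /\ rho u w = rho w w)) /\
  (forall u w, rho u u <= rho u w) /\
  (forall u w, rho u w = rho w u) /\
  (forall (u w : E) (z : nat -> E),
      rho u w <= rho u (z 1%nat) + inner_chain rho z (v - 1) + rho (z v) w
                 - diag_sum rho z v).

Definition pconverges {E : Type} (rho : E -> E -> R) (u : nat -> E) (x : E) : Prop :=
  Un_cv (fun n => rho (u n) x) (rho x x).

Definition double_lim {E : Type} (rho : E -> E -> R) (u : nat -> E) (L : R) : Prop :=
  forall eps, eps > 0 -> exists N, forall n m, (n >= N)%nat -> (m >= N)%nat ->
    Rabs (rho (u n) (u m) - L) < eps.

Definition pCauchy {E : Type} (rho : E -> E -> R) (u : nat -> E) : Prop :=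
  exists L : R, double_lim rho u L.

Definition pcomplete {E : Type} (rho : E -> E -> R) : Prop :=
  forall u : nat -> E, pCauchy rho u ->
    exists x : E, double_lim rho u (rho x x) /\ pconverges rho u x.

(** The Picard orbit of a contraction satisfies [rho(x_n, x_(n+k)) <= lambda^n rho(x_0, x_k)],
    and the collapsed triangle inequality [rho u w <= rho u y + rho y w - rho y y] bounds
    [rho(x_0, x_k)] by a geometric series, so [rho(x_n, x_m) -> 0]. Completeness yields a
    limit [b] with [rho b b = 0]; the triangle inequality through [S x_n] then squeezes
    [rho b (S b)] to [0], and [u = w] iff [rho u u = rho u w = rho w w] turns these zeros into
    [S b = b]. A second fixed point [c] has [rho c c <= lambda rho c c] and
    [rho c b <= lambda rho c b], hence coincides with [b]. *)

From Stdlib Require Import Reals Lra Lia.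
Open Scope R_scope.

Lemma inner_chain_const {E : Type} (rho : E -> E -> R) (y : E) (k : nat) :
  inner_chain rho (fun _ => y) k = INR k * rho y y.
Proof. induction k as [|k IH]; simpl inner_chain; [simpl; ring|rewrite IH, S_INR; ring]. Qed.

Lemma diag_sum_const {E : Type} (rho : E -> E -> R) (y : E) (k : nat) :
  diag_sum rho (fun _ => y) k = INR k * rho y y.
Proof. induction k as [|k IH]; simpl diag_sum; [simpl; ring|rewrite IH, S_INR; ring]. Qed.

Lemma Un_cv_const (c : R) : Un_cv (fun _ => c) c.
Proof.
  intros eps Heps; exists 0%nat; intros n _.
  unfold R_dist; replace (c - c) with 0 by ring; rewrite Rabs_R0; exact Heps.
Qed.

Section DoubleLimit.

Variables (E : Type) (rho : E -> E -> R) (u : nat -> E).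

Lemma double_lim_diag (L : R) :
  double_lim rho u L -> Un_cv (fun n => rho (u n) (u n)) L.
Proof.
  intros Hlim eps Heps; destruct (Hlim eps Heps) as [N HN].
  exists N; intros n Hn; apply HN; exact Hn.
Qed.

Lemma double_lim_unique (L1 L2 : R) :
  double_lim rho u L1 -> double_lim rho u L2 -> L1 = L2.
Proof. intros H1 H2; exact (UL_sequence _ _ _ (double_lim_diag _ H1) (double_lim_diag _ H2)). Qed.

End DoubleLimit.

Section PartialMetric.

Variables (E : Type) (v : nat) (rho : E -> E -> R).
Hypothesis Hrho : partial_v_gen_metric v rho.

Lemma rho_ge0 (u w : E) : 0 <= rho u w.
Proof. destruct Hrho as (_ & H & _); apply H. Qed.

Lemma rho_eq (u w : E) : rho u u = rho u w -> rho u w = rho w w -> u = w.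
Proof. destruct Hrho as (_ & _ & H & _); intros; apply H; split; assumption. Qed.

Lemma rho_diag_le (u w : E) : rho u u <= rho u w.
Proof. destruct Hrho as (_ & _ & _ & H & _); apply H. Qed.

Lemma rho_sym (u w : E) : rho u w = rho w u.
Proof. destruct Hrho as (_ & _ & _ & _ & H & _); apply H. Qed.

(* All [v] intermediate points equal to [y]: the [v - 1] inner links and the [v] diagonal
   terms then cancel down to a single [rho y y]. *)
Lemma rho_triangle (u y w : E) : rho u w <= rho u y + rho y w - rho y y.
Proof.
  destruct Hrho as (Hv & _ & _ & _ & _ & H).
  specialize (H u w (fun _ => y)).
  rewrite inner_chain_const, diag_sum_const, minus_INR in H by lia.
  simpl in H; lra.
Qed.

Section Contraction.

Variables (f : E -> E) (lambda : R).
Hypothesis Hlambda : 0 <= lambda < 1.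
Hypothesis Hf : forall u w : E, rho (f u) (f w) <= lambda * rho u w.

Lemma fixed_point_self_dist0 (c : E) : f c = c -> rho c c = 0.
Proof.
  intros Hc; pose proof (Hf c c) as H; rewrite Hc in H.
  pose proof (rho_ge0 c c); nra.
Qed.

Lemma fixed_point_unique (b c : E) : f b = b -> f c = c -> b = c.
Proof.
  intros Hb Hc.
  assert (Hbc : rho b c = 0).
  { pose proof (Hf b c) as H; rewrite Hb, Hc in H.
    pose proof (rho_ge0 b c); nra. }
  apply rho_eq; rewrite ?Hbc, ?fixed_point_self_dist0; auto.
Qed.

Variable x0 : E.

Definition orbit (n : nat) : E := Nat.iter n f x0.

Lemma orbit_succ (n : nat) : orbit (n + 1) = f (orbit n).
Proof. rewrite Nat.add_1_r; reflexivity. Qed.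

Lemma orbit_dist_contract (n k : nat) :
  rho (orbit n) (orbit (n + k)) <= lambda ^ n * rho x0 (orbit k).
Proof.
  induction n as [|n IH]; simpl; [lra|].
  eapply Rle_trans; [apply Hf|].
  rewrite Rmult_assoc; apply Rmult_le_compat_l; [lra|exact IH].
Qed.

Lemma orbit_dist_from_start (k : nat) :
  rho x0 (orbit k)
  <= rho x0 x0 + rho x0 (orbit 1) * (1 - lambda ^ k) / (1 - lambda).
Proof.
  induction k as [|k IH].
  - simpl; replace (rho x0 (orbit 1) * (1 - 1) / (1 - lambda)) with 0 by (field; lra).
    unfold orbit; simpl; lra.
  - pose proof (rho_triangle x0 (orbit k) (orbit (S k))) as Htri.
    pose proof (orbit_dist_contract k 1) as Hstep.
    rewrite Nat.add_1_r in Hstep.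
    pose proof (rho_ge0 (orbit k) (orbit k)).
    replace (rho x0 x0 + rho x0 (orbit 1) * (1 - lambda ^ S k) / (1 - lambda))
      with (rho x0 x0 + rho x0 (orbit 1) * (1 - lambda ^ k) / (1 - lambda)
            + lambda ^ k * rho x0 (orbit 1)) by (simpl; field; lra).
    lra.
Qed.

Let C : R := rho x0 x0 + rho x0 (orbit 1) / (1 - lambda).

Lemma orbit_dist_from_start_bounded (k : nat) : rho x0 (orbit k) <= C.
Proof.
  eapply Rle_trans; [apply orbit_dist_from_start|unfold C].
  pose proof (pow_le lambda k (proj1 Hlambda)).
  pose proof (rho_ge0 x0 (orbit 1)).
  assert (Hinv : 0 < / (1 - lambda)) by (apply Rinv_0_lt_compat; lra).
  unfold Rdiv; apply Rplus_le_compat_l, Rmult_le_compat_r; nra.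
Qed.

Lemma orbit_dist_le (n m : nat) : (n <= m)%nat -> rho (orbit n) (orbit m) <= lambda ^ n * C.
Proof.
  intros Hnm; replace m with (n + (m - n))%nat by lia.
  eapply Rle_trans; [apply orbit_dist_contract|].
  apply Rmult_le_compat_l; [apply pow_le; lra|apply orbit_dist_from_start_bounded].
Qed.

Lemma orbit_double_lim0 : double_lim rho orbit 0.
Proof.
  assert (HC : 0 <= C).
  { pose proof (orbit_dist_from_start_bounded 0); pose proof (rho_ge0 x0 (orbit 0)); lra. }
  intros eps Heps.
  destruct (pow_lt_1_zero lambda ltac:(rewrite Rabs_pos_eq; lra) (eps / (C + 1)))
    as [N HN]; [apply Rdiv_lt_0_compat; lra|].
  assert (Hsmall : forall n m, (N <= n <= m)%nat -> rho (orbit n) (orbit m) < eps).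
  { intros n m [Hn Hnm].
    specialize (HN n Hn); rewrite Rabs_pos_eq in HN by (apply pow_le; lra).
    apply (Rmult_lt_compat_r (C + 1)) in HN; [|lra].
    replace (eps / (C + 1) * (C + 1)) with eps in HN by (field; lra).
    pose proof (orbit_dist_le n m Hnm); pose proof (pow_le lambda n (proj1 Hlambda)); nra. }
  exists N; intros n m Hn Hm.
  rewrite Rminus_0_r, Rabs_pos_eq by apply rho_ge0.
  destruct (Nat.le_ge_cases n m); [|rewrite rho_sym]; apply Hsmall; lia.
Qed.

Lemma orbit_limit_fixed (b : E) : pconverges rho orbit b -> rho b b = 0 -> f b = b.
Proof.
  intros Hconv Hbb; unfold pconverges in Hconv; rewrite Hbb in Hconv.
  assert (Hbfb : rho b (f b) <= 0).
  { replace 0 with (0 + lambda * 0) by ring.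
    apply (Rle_cv_lim (Un := fun _ => rho b (f b))
             (Vn := fun n => rho (orbit (n + 1)) b + lambda * rho (orbit n) b)).
    - intros n; rewrite orbit_succ, (rho_sym (f (orbit n)) b).
      pose proof (rho_triangle b (f (orbit n)) (f b)).
      pose proof (Hf (orbit n) b); pose proof (rho_ge0 (f (orbit n)) (f (orbit n))); lra.
    - apply Un_cv_const.
    - apply CV_plus; [apply (CV_shift' (fun n => rho (orbit n) b))|apply CV_mult; [apply Un_cv_const|]];
        exact Hconv. }
  pose proof (rho_ge0 b (f b)); pose proof (rho_ge0 (f b) (f b)).
  pose proof (rho_diag_le (f b) b); rewrite (rho_sym (f b) b) in *.
  symmetry; apply rho_eq; lra.
Qed.

End Contraction.

End PartialMetric.

Theorem mainTheorem5 (E : Type) (v : nat) (rho : E -> E -> R) (S : E -> E) (lambda : R) :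
  inhabited E ->
  partial_v_gen_metric v rho ->
  pcomplete rho ->
  0 <= lambda < 1 ->
  (forall u w : E, rho (S u) (S w) <= lambda * rho u w) ->
  exists b : E, S b = b /\ rho b b = 0 /\ (forall c : E, S c = c -> c = b).
Proof.
  intros [x0] Hrho Hcomplete Hlambda HS.
  pose proof (orbit_double_lim0 E v rho Hrho S lambda Hlambda HS x0) as Hcauchy.
  destruct (Hcomplete _ (ex_intro _ 0 Hcauchy)) as (b & Hdiag & Hconv).
  assert (Hbb : rho b b = 0) by exact (eq_sym (double_lim_unique _ _ _ _ _ Hcauchy Hdiag)).
  assert (Hfix : S b = b) by exact (orbit_limit_fixed E v rho Hrho S lambda HS x0 b Hconv Hbb).
  exists b; split; [exact Hfix|split; [exact Hbb|]].
  intros c Hc; exact (fixed_point_unique E v rho Hrho S lambda Hlambda HS c b Hc Hfix).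
Qed.
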